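(* Let $\Sigma$ be a rational fan and $f\in\mathrm{PL}(\Sigma)$. Then $[e^f]=1$ in $\underline{\mathrm{PE}}(\Sigma)$ if and only if $f\in\mathrm{L}(\Sigma)$.
   Context: $N$ is a free abelian group of rank $n$, $N_\mathbb{R}=N\otimes_\mathbb{Z}\mathbb{R}$, $M=\mathrm{Hom}_\mathbb{Z}(N,\mathbb{Z})$; elements of $M$ are viewed as integral linear functions $N_\mathbb{R}\to\mathbb{R}$. A rational fan is a finite collection of rational polyhedral cones in $N_\mathbb{R}$, closed under faces, with pairwise intersections faces of both; $|\Sigma|$ is its support. $\mathrm{PL}(\Sigma)$ is the group of functions $f:|\Sigma|\to\mathbb{R}$ such that for every cone $\sigma\in\Sigma$ there is $m\in M$ with $f|_\sigma=m|_\sigma$; $\mathrm{L}(\Sigma)\subseteq\mathrm{PL}(\Sigma)$ is the subgroup of restrictions $m|_{|\Sigma|}$, $m\in M$. $\mathrm{PE}(\Sigma)$ is the subring of the ring of real-valued functions on $|\Sigma|$ generated by the $e^f$, $f\in\mathrm{PL}(\Sigma)$, and $\underline{\mathrm{PE}}(\Sigma)=\mathrm{PE}(\Sigma)/\langle e^\ell-1\mid \ell\in\mathrm{L}(\Sigma)\rangle$. *)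

From Stdlib Require List.
From mathcomp Require Import all_boot all_order all_algebra.
From mathcomp Require Import all_classical all_reals all_analysis.
Set Implicit Arguments. Unset Strict Implicit. Unset Printing Implicit Defensive.
Import Order.TTheory GRing.Theory Num.Theory.
Local Open Scope ring_scope.
Local Open Scope classical_set_scope.

Section Fans.
Variables (R : realType) (n : nat).

(* N = Z^n, N_R = R^n (row vectors), M = Z^n acting by the standard pairing. *)
Definition pairM (m : 'rV[int]_n) (x : 'rV[R]_n) : R :=
  \sum_(i < n) (m ord0 i)%:~R * x ord0 i.

Definition pairR (u : 'rV[R]_n) (x : 'rV[R]_n) : R :=
  \sum_(i < n) u ord0 i * x ord0 i.

Definition cone_gen (gens : seq 'rV[int]_n) : set 'rV[R]_n :=
  [set x | exists c : 'rV[int]_n -> R,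
     (forall v, 0 <= c v) /\
     x = \sum_(v <- gens) c v *: map_mx (fun z : int => z%:~R) v].

Definition rational_cone (s : set 'rV[R]_n) : Prop :=
  exists gens, s = cone_gen gens.

Definition is_face (t s : set 'rV[R]_n) : Prop :=
  exists u : 'rV[R]_n, (forall x, s x -> 0 <= pairR u x) /\
    t = s `&` [set x | pairR u x = 0].

Definition is_fan (F : seq (set 'rV[R]_n)) : Prop :=
  [/\ forall s, Stdlib.Lists.List.In s F -> rational_cone s,
      forall s t, Stdlib.Lists.List.In s F -> is_face t s -> Stdlib.Lists.List.In t F &
      forall s t, Stdlib.Lists.List.In s F -> Stdlib.Lists.List.In t F ->
        is_face (s `&` t) s /\ is_face (s `&` t) t].

Definition support (F : seq (set 'rV[R]_n)) : set 'rV[R]_n :=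
  [set x | exists s, Stdlib.Lists.List.In s F /\ s x].

(* Functions |F| -> R are represented by functions R^n -> R; only their
   values on |F| matter (all predicates below are invariant under change
   off |F|). *)
Definition PL (F : seq (set 'rV[R]_n)) (f : 'rV[R]_n -> R) : Prop :=
  forall s, Stdlib.Lists.List.In s F -> exists m : 'rV[int]_n, forall x, s x -> f x = pairM m x.

Definition Lin (F : seq (set 'rV[R]_n)) (f : 'rV[R]_n -> R) : Prop :=
  exists m : 'rV[int]_n, forall x, support F x -> f x = pairM m x.

Inductive PE (F : seq (set 'rV[R]_n)) : ('rV[R]_n -> R) -> Prop :=
  | PE_exp f : PL F f -> PE F (fun x => expR (f x))
  | PE_one : PE F (fun _ => 1)
  | PE_add g h : PE F g -> PE F h -> PE F (fun x => g x + h x)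
  | PE_opp g : PE F g -> PE F (fun x => - g x)
  | PE_mul g h : PE F g -> PE F h -> PE F (fun x => g x * h x)
  | PE_ext g h : PE F g -> (forall x, support F x -> g x = h x) -> PE F h.

Inductive PE_ideal (F : seq (set 'rV[R]_n)) : ('rV[R]_n -> R) -> Prop :=
  | I_gen l : Lin F l -> PE_ideal F (fun x => expR (l x) - 1)
  | I_zero : PE_ideal F (fun _ => 0)
  | I_add g h : PE_ideal F g -> PE_ideal F h -> PE_ideal F (fun x => g x + h x)
  | I_mul a g : PE F a -> PE_ideal F g -> PE_ideal F (fun x => a x * g x)
  | I_ext g h : PE_ideal F g -> (forall x, support F x -> g x = h x) ->
                PE_ideal F h.

(* [g] = [h] in the quotient PE(F)/I *)
Definition PEbar_eq (F : seq (set 'rV[R]_n)) (g h : 'rV[R]_n -> R) : Prop :=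
  PE_ideal F (fun x => g x - h x).

End Fans.

(* Every element of PE(Σ) is the restriction of a formal sum g = Σ c_i e^{f_i} with
   f_i ∈ PL(Σ).  Since PL functions are positively homogeneous, t ↦ g(t x) is an
   exponential sum in t, so the "derivative at 0" D(g)(x) = Σ c_i f_i(x) depends only
   on g as a function on |Σ|.  D is a derivation over the augmentation ε(g) = Σ c_i,
   hence on the ideal generated by the e^ℓ - 1 it takes values in L(Σ) (there ε = 0
   and D(e^ℓ - 1) = ℓ).  If e^f - 1 lies in the ideal, then f = D(e^f - 1) ∈ L(Σ). *)

From Pilot Require Import Defs.
From mathcomp Require Import all_boot all_order all_algebra.
From mathcomp Require Import all_classical all_reals all_analysis.
From mathcomp Require Import ring lra.
Set Implicit Arguments. Unset Strict Implicit. Unset Printing Implicit Defensive.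
Import Order.TTheory GRing.Theory Num.Theory.
Local Open Scope ring_scope.

Section ExpSums.
Variable R : realType.

Lemma norm_expR_sub1_sub_le (y : R) : `|y| <= 1/2 -> `|expR y - 1 - y| <= 2 * y ^+ 2.
Proof.
move=> hy.
have h1 := expR_ge1Dx y; have h2 := expR_ge1Dx (- y).
have h3 := expRxMexpNx_1 y; have h4 := expR_gt0 y; have h5 := expR_gt0 (- y).
set E := expR y in h1 h3 h4 *; set En := expR (- y) in h2 h3 h5.
rewrite ger0_norm; last by lra.
case: (lerP 0 y) => hy0.
- rewrite ger0_norm // in hy.
  have : E - 1 <= y * E by nra.
  nra.
- rewrite ltr0_norm // in hy.
  have : E * (1 - y) <= 1 by nra.
  nra.
Qed.

Lemma eq0_norm_le_linear (S C d : R) : 0 < d ->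
  (forall t, 0 < t -> t <= d -> `|S| <= t * C) -> S = 0.
Proof.
move=> d0 hS; apply/normr0_eq0/eqP; rewrite eq_le normr_ge0 andbT.
apply/ler_addgt0Pr => e e0; rewrite add0r.
pose t := Num.min d (e / (`|C| + 1)).
have t0 : 0 < t by rewrite lt_min d0 divr_gt0 // ltr_wpDl.
have te : t * (`|C| + 1) <= e by rewrite -ler_pdivlMr ?ltr_wpDl // ge_min lexx orbT.
apply: (le_trans (hS t t0 _)); first by rewrite ge_min lexx.
have := ler_norm C; have : 0 <= t by exact: ltW.
nra.
Qed.

Lemma sum_expR_slope0 (s : seq (R * R)) :
  (forall t, 0 <= t -> \sum_(p <- s) p.1 * expR (t * p.2) = 0) ->
  \sum_(p <- s) p.1 * p.2 = 0.
Proof.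
move=> hs.
set A := \sum_(p <- s) `|p.2|.
set K := \sum_(p <- s) `|p.1| * p.2 ^+ 2.
have A0 : 0 <= A by rewrite sumr_ge0.
have hA : forall p, p \in s -> `|p.2| <= A.
  by move=> p ps; rewrite /A (big_rem p ps) lerDl sumr_ge0.
apply: (@eq0_norm_le_linear _ (2 * K) (1 / (2 * (A + 1)))); first by rewrite divr_gt0 //; lra.
move=> t t0 td.
have tA : t * (2 * (A + 1)) <= 1 by rewrite -ler_pdivlMr //; lra.
(* the terms of order 0 and 1 cancel, since Σ a = 0 is [hs] at t = 0 *)
have remainder : t * \sum_(p <- s) p.1 * p.2 =
    - \sum_(p <- s) p.1 * (expR (t * p.2) - 1 - t * p.2).
  have sum_a : \sum_(p <- s) p.1 = 0.
    by have := hs 0 (lexx _); under eq_bigr do rewrite mul0r expR0 mulr1.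
  have -> : \sum_(p <- s) p.1 * (expR (t * p.2) - 1 - t * p.2) =
      \sum_(p <- s) p.1 * expR (t * p.2) - \sum_(p <- s) p.1 - t * \sum_(p <- s) p.1 * p.2.
    by rewrite mulr_sumr -!sumrB; apply: eq_bigr => p _; ring.
  by rewrite hs ?ltW // sum_a; ring.
suff : t * `|\sum_(p <- s) p.1 * p.2| <= t * (t * (2 * K)) by rewrite ler_pM2l.
rewrite -(gtr0_norm t0) -normrM remainder normrN (gtr0_norm t0).
rewrite (le_trans (ler_norm_sum _ _ _)) // /K !mulr_sumr big_seq [X in _ <= X]big_seq.
apply: ler_sum => p ps; rewrite normrM.
have tp : `|t * p.2| <= 1/2.
  rewrite normrM (gtr0_norm t0).
  have := hA p ps; have : 0 <= `|p.2| by [].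
  nra.
have := norm_expR_sub1_sub_le tp; have : 0 <= `|p.1| by [].
move=> a0 hb; rewrite (le_trans (ler_wpM2l a0 hb)) //.
by rewrite exprMn; lra.
Qed.

End ExpSums.

Section Fan.
Variables (R : realType) (n : nat).
Local Notation V := 'rV[R]_n.
Local Open Scope classical_set_scope.

Lemma pairMZ (m : 'rV[int]_n) t (x : V) : pairM m (t *: x) = t * pairM m x.
Proof. by rewrite /pairM mulr_sumr; apply: eq_bigr => i _; rewrite mxE; ring. Qed.

Lemma pairMDl (m1 m2 : 'rV[int]_n) (x : V) :
  pairM (m1 + m2) x = pairM m1 x + pairM m2 x.
Proof. by rewrite /pairM -big_split; apply: eq_bigr => i _; rewrite mxE intrD mulrDl. Qed.

Lemma pairM0l (x : V) : pairM 0 x = 0.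
Proof. by rewrite /pairM big1 // => i _; rewrite mxE mul0r. Qed.

Lemma pairMzl (k : int) (m : 'rV[int]_n) (x : V) :
  pairM (k *: m) x = k%:~R * pairM m x.
Proof. by rewrite /pairM mulr_sumr; apply: eq_bigr => i _; rewrite mxE intrM; ring. Qed.

Lemma rational_cone_scale (s : set V) x t :
  rational_cone s -> s x -> 0 <= t -> s (t *: x).
Proof.
move=> [gens ->] [c [c0 ->]] t0.
exists (fun v => t * c v); split; first by move=> v; rewrite mulr_ge0.
by rewrite scaler_sumr; apply: eq_bigr => v _; rewrite scalerA.
Qed.

Variable F : seq (set V).
Hypothesis hF : is_fan F.

Lemma support_scale x t : Defs.support F x -> 0 <= t -> Defs.support F (t *: x).
Proof.
case: hF => cones _ _ [s [sF sx]] t0.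
by exists s; split => //; exact: rational_cone_scale (cones _ sF) sx t0.
Qed.

Lemma PL_homogeneous f x t : PL F f -> Defs.support F x -> 0 <= t -> f (t *: x) = t * f x.
Proof.
case: hF => cones _ _ hf [s [sF sx]] t0.
have [m hm] := hf s sF.
by rewrite !hm ?pairMZ //; exact: rational_cone_scale (cones _ sF) sx t0.
Qed.

Lemma PLD f g : PL F f -> PL F g -> PL F (fun x => f x + g x).
Proof.
move=> hf hg s sF; have [m1 h1] := hf s sF; have [m2 h2] := hg s sF.
by exists (m1 + m2) => x sx; rewrite pairMDl h1 ?h2.
Qed.

Lemma PL0 : PL F (fun _ => 0).
Proof. by move=> s sF; exists 0 => x _; rewrite pairM0l. Qed.

Lemma Lin_PL f : Lin F f -> PL F f.
Proof. by move=> [m hm] s sF; exists m => x sx; apply: hm; exists s. Qed.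

Lemma Lin_ext f g : Lin F f -> (forall x, Defs.support F x -> f x = g x) -> Lin F g.
Proof. by move=> [m hm] e; exists m => x sx; rewrite -e ?hm. Qed.

Lemma LinD f g : Lin F f -> Lin F g -> Lin F (fun x => f x + g x).
Proof. by move=> [m1 h1] [m2 h2]; exists (m1 + m2) => x sx; rewrite pairMDl h1 ?h2. Qed.

Lemma LinMzl (k : int) f : Lin F f -> Lin F (fun x => k%:~R * f x).
Proof. by move=> [m h]; exists (k *: m) => x sx; rewrite pairMzl h. Qed.

Lemma Lin0 : Lin F (fun _ => 0).
Proof. by exists 0 => x _; rewrite pairM0l. Qed.

Record plfun := PLFun { plfun_val :> V -> R; plfun_PL : PL F plfun_val }.

Definition plfun_add (f g : plfun) : plfun := PLFun (PLD (plfun_PL f) (plfun_PL g)).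
Definition plfun0 : plfun := PLFun PL0.

(* A formal Z-linear combination Σ c e^f of exponentials of PL functions. *)
Definition expsum := seq (int * plfun).

Definition esum_val (L : expsum) (x : V) : R := \sum_(p <- L) p.1%:~R * expR (p.2 x).
Definition esum_aug (L : expsum) : int := \sum_(p <- L) p.1.
Definition esum_der (L : expsum) (x : V) : R := \sum_(p <- L) p.1%:~R * p.2 x.

Definition esum_opp (L : expsum) : expsum := [seq (- p.1, p.2) | p <- L].
Definition esum_mul (L1 L2 : expsum) : expsum :=
  [seq (p.1 * q.1, plfun_add p.2 q.2) | p <- L1, q <- L2].
Definition esum_exp_sub1 (f : plfun) : expsum := [:: (1, f); (-1, plfun0)].

Definition represents (g : V -> R) (L : expsum) : Prop := forall x, Defs.support F x -> g x = esum_val L x.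

Lemma esum_val_cat L1 L2 x : esum_val (L1 ++ L2) x = esum_val L1 x + esum_val L2 x.
Proof. by rewrite /esum_val big_cat. Qed.

Lemma esum_aug_cat L1 L2 : esum_aug (L1 ++ L2) = esum_aug L1 + esum_aug L2.
Proof. by rewrite /esum_aug big_cat. Qed.

Lemma esum_der_cat L1 L2 x : esum_der (L1 ++ L2) x = esum_der L1 x + esum_der L2 x.
Proof. by rewrite /esum_der big_cat. Qed.

Lemma esum_val_opp L x : esum_val (esum_opp L) x = - esum_val L x.
Proof. by rewrite /esum_val big_map -sumrN; apply: eq_bigr => p _; rewrite intrN mulNr. Qed.

Lemma esum_der_opp L x : esum_der (esum_opp L) x = - esum_der L x.
Proof. by rewrite /esum_der big_map -sumrN; apply: eq_bigr => p _; rewrite intrN mulNr. Qed.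

Lemma esum_val_mul L1 L2 x : esum_val (esum_mul L1 L2) x = esum_val L1 x * esum_val L2 x.
Proof.
rewrite /esum_val big_allpairs_dep mulr_suml; apply: eq_bigr => p _.
by rewrite mulr_sumr; apply: eq_bigr => q _ /=; rewrite intrM expRD; ring.
Qed.

Lemma esum_aug_mul L1 L2 : esum_aug (esum_mul L1 L2) = esum_aug L1 * esum_aug L2.
Proof.
rewrite /esum_aug big_allpairs_dep mulr_suml; apply: eq_bigr => p _.
by rewrite mulr_sumr.
Qed.

Lemma esum_der_mul L1 L2 x : esum_der (esum_mul L1 L2) x =
  (esum_aug L2)%:~R * esum_der L1 x + (esum_aug L1)%:~R * esum_der L2 x.
Proof.
rewrite /esum_der big_allpairs_dep.
transitivity (\sum_(p <- L1) (p.1%:~R * p.2 x * (esum_aug L2)%:~R + p.1%:~R * esum_der L2 x)).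
  apply: eq_bigr => p _; rewrite /esum_aug /esum_der rmorph_sum !mulr_sumr -big_split.
  by apply: eq_bigr => q _ /=; rewrite intrM; ring.
by rewrite big_split /= -!mulr_suml /esum_aug /esum_der !rmorph_sum /=; ring.
Qed.

Lemma represents_exp_sub1 (f : plfun) :
  represents (fun x => expR (f x) - 1) (esum_exp_sub1 f).
Proof. by move=> x _; rewrite /esum_val !big_cons big_nil /= expR0; ring. Qed.

Lemma esum_der_exp_sub1 (f : plfun) x : esum_der (esum_exp_sub1 f) x = f x.
Proof. by rewrite /esum_der !big_cons big_nil /=; ring. Qed.

Lemma PE_represented g : PE F g -> exists L, represents g L.
Proof.
elim=> {g} [f hf | | g h _ [L1 e1] _ [L2 e2] | g _ [L e] | g h _ [L1 e1] _ [L2 e2]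
           | g h _ [L e] eh].
- exists [:: (1, PLFun hf)] => x _.
  by rewrite /esum_val big_cons big_nil /= mul1r addr0.
- exists [:: (1, plfun0)] => x _.
  by rewrite /esum_val big_cons big_nil /= mul1r expR0 addr0.
- by exists (L1 ++ L2) => x sx; rewrite esum_val_cat e1 ?e2.
- by exists (esum_opp L) => x sx; rewrite esum_val_opp e.
- by exists (esum_mul L1 L2) => x sx; rewrite esum_val_mul e1 ?e2.
- by exists L => x sx; rewrite -eh ?e.
Qed.

Lemma PE_ideal_represented g : PE_ideal F g ->
  exists L, [/\ represents g L, esum_aug L = 0 & Lin F (esum_der L)].
Proof.
elim=> {g} [l hl | | g h _ [L1 [e1 z1 l1]] _ [L2 [e2 z2 l2]] | a g ha _ [L2 [e2 z2 l2]]
           | g h _ [L [e z l]] eh].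
- exists (esum_exp_sub1 (PLFun (Lin_PL hl))); split.
  + exact: (represents_exp_sub1 (PLFun _)).
  + by rewrite /esum_aug !big_cons big_nil.
  + by apply: Lin_ext (hl) _ => x _; rewrite esum_der_exp_sub1.
- exists [::]; split; first by move=> x _; rewrite /esum_val big_nil.
    by rewrite /esum_aug big_nil.
  by apply: Lin_ext Lin0 _ => x _; rewrite /esum_der big_nil.
- exists (L1 ++ L2); split.
  + by move=> x sx; rewrite esum_val_cat e1 ?e2.
  + by rewrite esum_aug_cat z1 z2 addr0.
  + by apply: Lin_ext (LinD l1 l2) _ => x _; rewrite esum_der_cat.
- have [L1 e1] := PE_represented ha.
  exists (esum_mul L1 L2); split.
  + by move=> x sx; rewrite esum_val_mul e1 ?e2.
  + by rewrite esum_aug_mul z2 mulr0.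
  + by apply: Lin_ext (LinMzl (esum_aug L1) l2) _ => x _; rewrite esum_der_mul z2 mul0r add0r.
- by exists L; split => // x sx; rewrite -eh ?e.
Qed.

Lemma esum_val_scale L x t : Defs.support F x -> 0 <= t ->
  esum_val L (t *: x) = \sum_(p <- L) p.1%:~R * expR (t * p.2 x).
Proof.
by move=> sx t0; apply: eq_bigr => p _; rewrite (PL_homogeneous (plfun_PL p.2) sx t0).
Qed.

Lemma esum_der_eq0 L : (forall x, Defs.support F x -> esum_val L x = 0) ->
  forall x, Defs.support F x -> esum_der L x = 0.
Proof.
move=> L0 x sx.
have := @sum_expR_slope0 R [seq (p.1%:~R, p.2 x) | p : int * plfun <- L].
rewrite big_map; apply=> t t0.
by rewrite big_map -esum_val_scale // L0 //; exact: support_scale.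
Qed.

Lemma esum_der_unique g L1 L2 : represents g L1 -> represents g L2 ->
  forall x, Defs.support F x -> esum_der L1 x = esum_der L2 x.
Proof.
move=> e1 e2 x sx; apply/eqP; rewrite -subr_eq0 -esum_der_opp -esum_der_cat.
apply/eqP/esum_der_eq0 => // y sy.
by rewrite esum_val_cat esum_val_opp -e1 // -e2 // subrr.
Qed.

End Fan.

Theorem lemma2 (R : realType) (n : nat) (F : seq (set 'rV[R]_n))
  (hF : is_fan F) (f : 'rV[R]_n -> R) (hf : PL F f) :
  PEbar_eq F (fun x => expR (f x)) (fun _ => 1) <-> Lin F f.
Proof.
split=> [hI | hl]; last exact: I_gen.
have [L [eL _ lL]] := PE_ideal_represented hI.
pose f' := PLFun hf.
apply: Lin_ext lL _ => x sx.
by rewrite (esum_der_unique hF eL (represents_exp_sub1 f') sx) esum_der_exp_sub1.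
Qed.
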